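(* Assume $r=1$, $\gamma\neq 0$, $o(s)=n<\infty$, and that the polynomial $\psi$ is a nonzero constant $C$ (equivalently $\phi=(s-1)C$). If $M$ is a simple $L$-module on which $H^n$ acts as the scalar $C^n$, then $\operatorname{ann}M$ contains $u^n$ or $d^n$.
   Context: Let $s,\gamma\in\mathbb C$, $s\neq0$, $\gamma\neq 0$, $\phi\in\mathbb C[x]$, and let $L=L(\phi,1,s,\gamma)$ be the associative $\mathbb C$-algebra generated by $u,d,h$ subject to $hu-uh=\gamma u$, $dh-hd=\gamma d$, $du-sud=\phi(h)$. Fix $\psi\in\mathbb C[x]$ with $s\psi(x)-\psi(x+\gamma)=\phi(x)$ (such $\psi$ exists) and set $H=ud+\psi(h)\in L$; then $Hu=suH$ and $dH=sHd$. For $z\in\mathbb C^\times$, $o(z)$ denotes its multiplicative order. Modules are left modules. *)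

From HB Require Import structures.
From mathcomp Require Import all_boot all_order all_algebra.
Set Implicit Arguments. Unset Strict Implicit. Unset Printing Implicit Defensive.
Import Order.TTheory GRing.Theory Num.Theory.
Local Open Scope ring_scope.

Section LDefs.
Variables (F : fieldType) (V : lmodType F).

Definition peval (p : {poly F}) (f : V -> V) (v : V) : V :=
  \sum_(i < size p) p`_i *: iter i f v.

(* (U, D, Hh) are the actions of u, d, h defining a left module over
   L = L(phi, 1, s, gamma):  hu - uh = gamma u, dh - hd = gamma d,
   du - s ud = phi(h). *)
Definition is_L_module (phi : {poly F}) (s gamma : F) (U D Hh : V -> V) : Prop :=
  forall v : V,
    [/\ Hh (U v) - U (Hh v) = gamma *: U v,
        D (Hh v) - Hh (D v) = gamma *: D v &
        D (U v) - s *: U (D v) = peval phi Hh v].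

Definition L_simple (U D Hh : V -> V) : Prop :=
  (exists v : V, v != 0) /\
  forall S : V -> Prop,
    S 0 ->
    (forall a x y, S x -> S y -> S (a *: x + y)) ->
    (forall x, S x -> S (U x)) ->
    (forall x, S x -> S (D x)) ->
    (forall x, S x -> S (Hh x)) ->
    (forall x, S x -> x = 0) \/ (forall x, S x).

Definition H_act (psi : {poly F}) (U D Hh : V -> V) (v : V) : V :=
  U (D v) + peval psi Hh v.

End LDefs.

(* Put H' := ud + C, the action of H.  The relation du - s ud = (s - 1) C reads
   du = s H' - C, whence H' u = s u H' and d H' = s H' d; as s^n = 1, u^n and d^n
   commute with u and d, and they shift h by multiples of gamma.  So the kernels
   of u^n and d^n are submodules of the simple module M, and each is 0 or M.  If
   both are 0 then u and d are injective, and H' has no eigenvector for an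
   eigenvalue C s^i: u^(k-1) would carry an eigenvector for C s^-k to one for
   C s^-1, which du = s H' - C kills.  But (C^-1 H')^n = 1 and
   X^n - 1 = prod_(i < n) (X - s^i), so some C^-1 H' - s^i has a nonzero
   kernel. *)
From HB Require Import structures.
From mathcomp Require Import all_boot all_order all_algebra.
Set Implicit Arguments.
Unset Strict Implicit.
Unset Printing Implicit Defensive.
Import GRing.Theory.
Local Open Scope ring_scope.

Section PolyAction.
Variables (F : fieldType) (V : lmodType F) (f : {linear V -> V}).

Lemma iter_is_linear k : linear (iter k f).
Proof. by elim: k => // k IH a x y; rewrite iterS IH linearP. Qed.

HB.instance Definition _ k :=
  GRing.isLinear.Build F V V *:%R (iter k f) (iter_is_linear k).

Lemma iter_scale (a : F) k x : iter k (a \*: f) x = a ^+ k *: iter k f x.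
Proof.
by elim: k => [|k IH]; rewrite ?scale1r // !iterS IH /= linearZ scalerA exprS.
Qed.

Lemma iter_ker0_ker0 n : (0 < n)%N ->
  (forall y, iter n f y = 0 -> y = 0) -> forall x, f x = 0 -> x = 0.
Proof.
move=> n_gt0 iter_inj x fx0; apply: iter_inj.
by rewrite -(prednK n_gt0) iterSr fx0; exact: linear0.
Qed.

Lemma pevalE N (p : {poly F}) v : (size p <= N)%N ->
  peval p f v = \sum_(i < N) p`_i *: iter i f v.
Proof.
move=> hN; rewrite /peval (big_ord_widen N (fun i => p`_i *: iter i f v)) //.
rewrite big_mkcond; apply: eq_bigr => i _; case: ifP => // /negbT.
by rewrite -leqNgt => /(nth_default 0) ->; rewrite scale0r.
Qed.

Lemma pevalC (c : F) v : peval c%:P f v = c *: v.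
Proof. by rewrite (@pevalE 1) ?size_polyC_leq1 // big_ord1 coefC. Qed.

Lemma pevalD (p q : {poly F}) v : peval (p + q) f v = peval p f v + peval q f v.
Proof.
rewrite !(@pevalE (maxn (size p) (size q))) ?size_polyD ?leq_maxl ?leq_maxr //.
by rewrite -big_split; apply: eq_bigr => i _; rewrite coefD scalerDl.
Qed.

Lemma pevalZ (a : F) (p : {poly F}) v : peval (a *: p) f v = a *: peval p f v.
Proof.
rewrite !(@pevalE (size p)) ?size_scale_leq // scaler_sumr.
by apply: eq_bigr => i _; rewrite coefZ scalerA.
Qed.

Lemma pevalMX (p : {poly F}) v : peval (p * 'X) f v = peval p f (f v).
Proof.
rewrite (@pevalE (size p).+1) ?(@pevalE (size p)) //; last first.
  by have [->|/size_mulX ->] := eqVneq p 0; rewrite ?mul0r ?size_poly0.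
rewrite big_ord_recl coefMX eqxx scale0r add0r.
by apply: eq_bigr => i _; rewrite coefMX /= -iterSr.
Qed.

Lemma peval_comm (p : {poly F}) v : peval p f (f v) = f (peval p f v).
Proof. by rewrite /peval linear_sum; apply: eq_bigr => i _; rewrite linearZ -iterSr. Qed.

Lemma pevalM (p q : {poly F}) v : peval (p * q) f v = peval p f (peval q f v).
Proof.
elim/poly_ind: p v => [|p c IH] v; first by rewrite mul0r -polyC0 !pevalC !scale0r.
rewrite mulrDl mulrAC !pevalD !pevalMX IH mul_polyC pevalZ !pevalC.
by rewrite peval_comm.
Qed.

Lemma pevalXn k v : peval 'X^k f v = iter k f v.
Proof.
elim: k v => [|k IH] v; first by rewrite expr0 pevalC scale1r.
by rewrite exprSr pevalMX IH iterSr.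
Qed.

Lemma pevalXsubC (c : F) v : peval ('X - c%:P) f v = f v - c *: v.
Proof. by rewrite -polyCN pevalD pevalC -(expr1 'X) pevalXn scaleNr. Qed.

Lemma peval_prod_XsubC_eq0 (I : eqType) (r : seq I) (g : I -> F) x :
  (forall i, i \in r -> forall y, f y = g i *: y -> y = 0) ->
  peval (\prod_(i <- r) ('X - (g i)%:P)) f x = 0 -> x = 0.
Proof.
elim: r x => [|i r IH] x eig; first by rewrite big_nil pevalC scale1r.
rewrite big_cons pevalM pevalXsubC => /eqP; rewrite subr_eq0 => /eqP.
move/(eig i (mem_head _ _))/IH; apply=> j jr.
by apply: eig; rewrite inE jr orbT.
Qed.

Lemma periodic_space_eq0 n (s : F) : n.-primitive_root s ->
  (forall x, iter n f x = x) ->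
  (forall i, (i < n)%N -> forall x, f x = s ^+ i *: x -> x = 0) ->
  forall x : V, x = 0.
Proof.
move=> prim_s per eig x; apply: (@peval_prod_XsubC_eq0 _ (index_iota 0 n)).
  by move=> i; rewrite mem_index_iota; apply: eig.
by rewrite (factor_Xn_sub_1 prim_s) -polyCN pevalD pevalXn pevalC per scaleN1r subrr.
Qed.

End PolyAction.

Section IterShift.
Variables (F : fieldType) (V : lmodType F) (A B : {linear V -> V}) (g : F).
Hypothesis BA : forall v, B (A v) - A (B v) = g *: A v.

Lemma iter_comm_shift j v :
  iter j A (B v) = B (iter j A v) - (j%:R * g) *: iter j A v.
Proof.
elim: j v => [|j IH] v; first by rewrite mul0r scale0r subr0.
have AB w : A (B w) = B (A w) - g *: A w by rewrite -(BA w) opprB addrC subrK.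
by rewrite iterS IH linearB linearZ /= AB -addrA -opprD -scalerDl mulrS mulrDl mul1r.
Qed.

Lemma iter_ker_shift j v : iter j A v = 0 -> iter j A (B v) = 0.
Proof. by rewrite iter_comm_shift => ->; rewrite linear0 scaler0 subr0. Qed.

End IterShift.

Section Casimir.
Variables (F : fieldType) (V : lmodType F) (U D : {linear V -> V}) (s C : F).

Definition casimir := (U \o D) \+ C \*: idfun.
HB.instance Definition _ := GRing.Linear.copy casimir casimir.

Lemma casimirE v : casimir v = U (D v) + C *: v.
Proof. by []. Qed.

Hypothesis DU : forall v, D (U v) - s *: U (D v) = (s * C - C) *: v.

Lemma DU_casimir v : D (U v) = s *: casimir v - C *: v.
Proof.
move/eqP: (DU v); rewrite subr_eq => /eqP ->.
by rewrite casimirE scalerDr scalerA scalerBl addrC addrA.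
Qed.

Lemma casimirU v : casimir (U v) = s *: U (casimir v).
Proof.
by rewrite casimirE DU_casimir linearB !linearZ /= scalerN subrK.
Qed.

Lemma D_casimir v : D (casimir v) = s *: casimir (D v).
Proof. by rewrite casimirE linearD linearZ /= DU_casimir subrK. Qed.

Lemma casimir_iterU j v : casimir (iter j U v) = s ^+ j *: iter j U (casimir v).
Proof.
elim: j v => [|j IH] v; first by rewrite scale1r.
by rewrite iterS casimirU IH linearZ /= scalerA -exprS.
Qed.

Lemma iterD_casimir j v : iter j D (casimir v) = s ^+ j *: casimir (iter j D v).
Proof.
elim: j v => [|j IH] v; first by rewrite scale1r.
by rewrite iterSr D_casimir linearZ /= IH scalerA -exprS -iterSr.
Qed.

Lemma iterU_D n v : s ^+ n = 1 -> iter n U (D v) = D (iter n U v).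
Proof.
case: n => [//|m] sn1.
rewrite [in RHS]iterS DU_casimir casimir_iterU scalerA -exprS sn1 scale1r.
by rewrite -linearZ -linearB casimirE addrK iterSr.
Qed.

Lemma iterD_U n v : s ^+ n = 1 -> iter n D (U v) = U (iter n D v).
Proof.
case: n => [//|m] sn1.
rewrite iterSr DU_casimir linearB !linearZ /= iterD_casimir scalerA -exprS sn1.
by rewrite scale1r casimirE scalerN addrK.
Qed.

Hypotheses (U_inj : forall x, U x = 0 -> x = 0) (D_inj : forall x, D x = 0 -> x = 0).

Lemma casimir_eigen0 j x : s ^+ j.+1 *: casimir x = C *: x -> x = 0.
Proof.
elim: j x => [|j IH] x eig.
  by apply/U_inj/D_inj; rewrite DU_casimir -eig expr1 subrr.
by apply/U_inj/IH; rewrite casimirU scalerA -exprSr -linearZ eig; apply: linearZ.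
Qed.

Lemma casimir_root_eigen0 n i x : s ^+ n = 1 -> (i < n)%N ->
  casimir x = (C * s ^+ i) *: x -> x = 0.
Proof.
move=> sn1 lt_i_n eig; apply: (@casimir_eigen0 (n - i.+1)).
by rewrite eig scalerA mulrCA -exprD subnSK // subnK 1?ltnW // sn1 mulr1.
Qed.

Lemma casimir_periodic_eq0 n : n.-primitive_root s -> C != 0 ->
  (forall x, iter n casimir x = C ^+ n *: x) -> forall x : V, x = 0.
Proof.
move=> prim_s C_neq0 casimir_n.
apply: (periodic_space_eq0 (f := C^-1 \*: casimir) prim_s) => [x | i lt_i_n x /= eig].
  by rewrite iter_scale casimir_n scalerA -exprMn mulVf // expr1n scale1r.
apply: (casimir_root_eigen0 (prim_expr_order prim_s) lt_i_n).
by rewrite -scalerA -eig scalerA mulfV // scale1r.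
Qed.

End Casimir.

Lemma L_simple_kernel (F : fieldType) (V : lmodType F) (U D Hh : V -> V)
    (W : {linear V -> V}) : L_simple U D Hh ->
  (forall x, W x = 0 -> W (U x) = 0) ->
  (forall x, W x = 0 -> W (D x) = 0) ->
  (forall x, W x = 0 -> W (Hh x) = 0) ->
  (forall x, W x = 0) \/ (forall x, W x = 0 -> x = 0).
Proof.
move=> [_ simple] kerU kerD kerH.
have kerP a x y : W x = 0 -> W y = 0 -> W (a *: x + y) = 0.
  by move=> Wx Wy; rewrite linearP Wx Wy scaler0 addr0.
by case: (simple _ (linear0 W) kerP kerU kerD kerH); [right | left].
Qed.

Section SimpleModule.
Variables (F : fieldType) (V : lmodType F) (U D Hh : {linear V -> V}).
Variables (s gamma C : F) (n : nat).
Hypotheses (HhU : forall v, Hh (U v) - U (Hh v) = gamma *: U v)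
  (HhD : forall v, Hh (D v) - D (Hh v) = - gamma *: D v)
  (DU : forall v, D (U v) - s *: U (D v) = (s * C - C) *: v)
  (simpleM : L_simple U D Hh) (n_gt0 : (0 < n)%N) (sn1 : s ^+ n = 1).

Lemma iterU_eq0_or_ker0 : (forall x, iter n U x = 0) \/ (forall x, U x = 0 -> x = 0).
Proof.
suff [? | /(iter_ker0_ker0 n_gt0) ?] :
  (forall x, iter n U x = 0) \/ (forall x, iter n U x = 0 -> x = 0) by [left | right].
apply: L_simple_kernel simpleM _ _ _ => x /=.
- by move=> Unx0; rewrite -iterSr iterS Unx0 linear0.
- by rewrite (iterU_D DU) // => ->; rewrite linear0.
- exact: iter_ker_shift.
Qed.

Lemma iterD_eq0_or_ker0 : (forall x, iter n D x = 0) \/ (forall x, D x = 0 -> x = 0).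
Proof.
suff [? | /(iter_ker0_ker0 n_gt0) ?] :
  (forall x, iter n D x = 0) \/ (forall x, iter n D x = 0 -> x = 0) by [left | right].
apply: L_simple_kernel simpleM _ _ _ => x /=.
- by rewrite (iterD_U DU) // => ->; rewrite linear0.
- by move=> Dnx0; rewrite -iterSr iterS Dnx0 linear0.
- exact: iter_ker_shift.
Qed.

End SimpleModule.

Theorem mainTheorem7 (F : fieldType) (s gamma C : F) (n : nat)
    (phi psi : {poly F})
    (hs : s != 0) (hgamma : gamma != 0)
    (hord : n.-primitive_root s)
    (hpsi_eq : s *: psi - (psi \Po ('X + gamma%:P)) = phi)
    (hpsiC : psi = C%:P) (hC : C != 0)
    (V : lmodType F) (U D Hh : {linear V -> V})
    (hmod : is_L_module phi s gamma U D Hh)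
    (hsimple : L_simple U D Hh)
    (hHn : forall v : V, iter n (H_act psi U D Hh) v = C ^+ n *: v) :
  (forall v : V, iter n U v = 0) \/ (forall v : V, iter n D v = 0).
Proof.
(* [hs] follows from [hord], and the value of [gamma] plays no role. *)
have hphi : phi = (s * C - C)%:P.
  by rewrite -hpsi_eq hpsiC comp_polyC scale_polyC polyCB.
have HhU v : Hh (U v) - U (Hh v) = gamma *: U v by case: (hmod v).
have HhD v : Hh (D v) - D (Hh v) = - gamma *: D v.
  by case: (hmod v) => _ DHh _; rewrite scaleNr -DHh opprB.
have DU v : D (U v) - s *: U (D v) = (s * C - C) *: v.
  by case: (hmod v) => _ _ ->; rewrite hphi pevalC.
have [n_gt0 sn1] := (prim_order_gt0 hord, prim_expr_order hord).
have [U0 | U_inj] := iterU_eq0_or_ker0 HhU DU hsimple n_gt0 sn1; first by left.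
have [D0 | D_inj] := iterD_eq0_or_ker0 HhD DU hsimple n_gt0 sn1; first by right.
have casimir_n x : iter n (casimir U D C) x = C ^+ n *: x.
  by rewrite -hHn; apply: eq_iter => v; rewrite /H_act hpsiC pevalC.
have [[v0 /eqP v0_neq0] _] := hsimple.
case: v0_neq0; exact: (casimir_periodic_eq0 DU U_inj D_inj hord hC casimir_n).
Qed.
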